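(* Let $\tau$ be a constant and consider, for $u+v^2>0$, the equation $$(u+v^2)f_{vv}+vf_v-f-\tau f^{-3}=0,\qquad f=\frac{1}{\sqrt{\phi}},$$ for a positive function $\phi(u,v)$. Its non-constant solutions are given by $$\phi(u,v)=\frac{2q(u)\left(\sqrt{u+v^2}\pm v\right)^2}{\left[q(u)\left(\sqrt{u+v^2}\pm v\right)^2+p(u)\right]^2+\tau},$$ where $p(u)$ and $q(u)$ are arbitrary functions.
   Context: $f_v,f_{vv}$ denote partial derivatives with respect to $v$. *)

From Stdlib Require Import Reals.
From Coquelicot Require Import Coquelicot.
Open Scope R_scope.

Definition wfun (s : bool) (u v : R) : R :=
  sqrt (u + v ^ 2) + (if s then v else - v).

Definition phi_sol (tau p q : R) (s : bool) (u v : R) : R :=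
  2 * q * (wfun s u v) ^ 2 / ((q * (wfun s u v) ^ 2 + p) ^ 2 + tau).

Definition f_of (phi_u : R -> R) : R -> R := fun v => / sqrt (phi_u v).

Definition eq_lhs (tau u : R) (f : R -> R) (v : R) : R :=
  (u + v ^ 2) * Derive_n f 2 v + v * Derive f v - f v - tau * / (f v ^ 3).

Definition twice_diff (phi : R -> R -> R) (u v : R) : Prop :=
  ex_derive (phi u) v /\ ex_derive (Derive (phi u)) v.

From Stdlib Require Import Reals Lra Lia ClassicalEpsilon.
From Coquelicot Require Import Coquelicot.
Open Scope R_scope.

(* Write g = f ^ 2 = / phi and D = sqrt (u + v ^ 2) d/dv.  Since D w = w for
   w = sqrt (u + v ^ 2) + v, D is d/dt in the variable t = ln w, and the
   equation becomes D h = E with h = D g and E = (4 tau + h ^ 2 + 4 g ^ 2) / (2 g).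
   Then D E = 4 h, so (g, h, E) solves a linear system with constant
   coefficients: g = A w ^ 2 + B + C / w ^ 2, where the first integrals
   A = (E + 2 h) / (8 w ^ 2), B = g - E / 4, C = (E - 2 h) w ^ 2 / 8 satisfy
   4 A C - B ^ 2 = tau.  Inverting g gives the formula with q = 2 A and p = B.
   If A = 0 then C <> 0 because phi is not constant, and the identity
   (sqrt (u + v ^ 2) + v) (sqrt (u + v ^ 2) - v) = u turns C / w ^ 2 into
   (C / u ^ 2) (sqrt (u + v ^ 2) - v) ^ 2, the formula with the other sign. *)

(* [auto_derive] leaves the eta-expanded [Derive (fun t => f t) x]. *)
Ltac rewrite_derive D :=
  match type of D with
  | is_derive ?f ?x _ => rewrite (is_derive_unique (fun t : R => f t) x _ D)
  end.

Lemma locally_open_interval (a b x : R) :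
  a < x < b -> locally x (fun t => a < t < b).
Proof. exact (open_and _ _ (open_gt a) (open_lt b) x). Qed.

Lemma is_derive_0_const_on (a b : R) (f : R -> R) :
  (forall t, a < t < b -> is_derive f t 0) ->
  forall x y, a < x < b -> a < y < b -> f x = f y.
Proof.
  intros Hd x y Hx Hy.
  assert (Hin : forall t, Rmin x y <= t <= Rmax x y -> a < t < b).
  { intros t Ht. unfold Rmin, Rmax in Ht. destruct (Rle_dec x y); lra. }
  destruct (MVT_gen f x y (fun _ => 0)) as [c [_ Hc]].
  - intros t Ht. apply Hd, Hin. lra.
  - intros t Ht. apply continuity_pt_filterlim. apply (ex_derive_continuous f).
    exists 0. apply Hd, Hin, Ht.
  - lra.
Qed.

Lemma ex_derive2_inv_on (a b x : R) (f F : R -> R) : a < x < b ->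
  (forall t, a < t < b ->
     F t = / f t /\ f t <> 0 /\ ex_derive f t /\ ex_derive (Derive f) t) ->
  ex_derive F x /\ ex_derive (Derive F) x.
Proof.
  intros Hx H.
  assert (DF : forall t, a < t < b -> is_derive F t (- Derive f t / f t ^ 2)).
  { intros t Ht. destruct (H t Ht) as (_ & Hf & Df & _).
    apply (is_derive_ext_loc (fun s => / f s)).
    - apply (filter_imp _ _ (fun s Hs => eq_sym (proj1 (H s Hs)))).
      exact (locally_open_interval a b t Ht).
    - exact (is_derive_inv f t _ (Derive_correct f t Df) Hf). }
  split; [exists (- Derive f x / f x ^ 2); exact (DF x Hx) |].
  apply (ex_derive_ext_loc (fun t => - Derive f t / f t ^ 2)).
  - apply (filter_imp _ _ (fun t Ht => eq_sym (is_derive_unique _ _ _ (DF t Ht)))).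
    exact (locally_open_interval a b x Hx).
  - destruct (H x Hx) as (_ & Hf & Df & D2f).
    auto_derive. repeat split; try assumption. rewrite Rmult_1_r.
    now apply Rmult_integral_contrapositive.
Qed.

Definition sg (s : bool) : R := if s then 1 else -1.

Lemma sg_sqr (s : bool) : sg s ^ 2 = 1.
Proof. destruct s; simpl; ring. Qed.

Lemma wfun_mul (u v : R) : 0 < u + v ^ 2 -> wfun true u v * wfun false u v = u.
Proof.
  intros H. unfold wfun.
  replace (_ * _) with (sqrt (u + v ^ 2) ^ 2 - v ^ 2) by ring.
  rewrite pow2_sqrt by lra. ring.
Qed.

Lemma wfun_neq0 (s : bool) (u v : R) : 0 < u + v ^ 2 -> u <> 0 -> wfun s u v <> 0.
Proof.
  intros H Hu Hw. apply Hu. rewrite <- (wfun_mul u v H).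
  destruct s; rewrite Hw; ring.
Qed.

Lemma is_derive_wfun_sqr (s : bool) (u x : R) : 0 < u + x ^ 2 ->
  is_derive (fun t => wfun s u t ^ 2) x (2 * sg s * / sqrt (u + x ^ 2) * wfun s u x ^ 2).
Proof.
  intros H. pose proof (sqrt_lt_R0 _ H) as Hr. pose proof (sqrt_sqrt _ (Rlt_le _ _ H)) as Hrr.
  unfold wfun, sg. destruct s; auto_derive;
    replace (u + x * (x * 1)) with (u + x ^ 2) by ring; try (split; [exact H | exact I]);
    field_simplify; try lra; rewrite <- Hrr at 1; field; lra.
Qed.

Lemma is_derive_div_sqrt (u x e : R) (h : R -> R) : 0 < u + x ^ 2 ->
  is_derive h x (/ sqrt (u + x ^ 2) * e) ->
  is_derive (fun t => / sqrt (u + t ^ 2) * h t) x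
    (/ (u + x ^ 2) * (e - x * (/ sqrt (u + x ^ 2) * h x))).
Proof.
  intros H Dh. pose proof (sqrt_lt_R0 _ H) as Hr.
  pose proof (sqrt_sqrt _ (Rlt_le _ _ H)) as Hrr.
  auto_derive.
  - replace (u + x * (x * 1)) with (u + x ^ 2) by ring. repeat split; try lra.
    eexists; exact Dh.
  - replace (u + x * (x * 1)) with (u + x ^ 2) by ring. rewrite_derive Dh.
    set (r := sqrt (u + x ^ 2)) in *. rewrite <- Hrr. field. lra.
Qed.

(* The equation for [g = f ^ 2], with [g1], [g2] standing for [g'], [g''] at [x]. *)
Definition sq_residual (tau u x g g1 g2 : R) : R :=
  (u + x ^ 2) * (2 * g * g2 - g1 ^ 2) + 2 * x * g * g1 - 4 * g ^ 2 - 4 * tau.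

Lemma sq_residual_time_change (tau u x g g1 g2 : R) : 0 < u + x ^ 2 ->
  sq_residual tau u x g g1 g2 =
  2 * g * (x * g1 + (u + x ^ 2) * g2) - (sqrt (u + x ^ 2) * g1) ^ 2 - 4 * g ^ 2 - 4 * tau.
Proof.
  intros H. unfold sq_residual.
  rewrite Rpow_mult_distr, pow2_sqrt by lra. ring.
Qed.

Lemma eq_lhs_sqrt (tau u a b v : R) (F g g1 g2 : R -> R) : a < v < b ->
  (forall t, a < t < b ->
     F t = sqrt (g t) /\ 0 < g t /\ is_derive g t (g1 t) /\ is_derive g1 t (g2 t)) ->
  eq_lhs tau u F v =
  sq_residual tau u v (g v) (g1 v) (g2 v) / (4 * g v * sqrt (g v)).
Proof.
  intros Hv H.
  assert (DF : forall t, a < t < b -> Derive F t = g1 t / (2 * sqrt (g t))).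
  { intros t Ht. destruct (H t Ht) as (_ & Hg & Dg & _).
    apply is_derive_unique, (is_derive_ext_loc (fun t => sqrt (g t))).
    - apply (filter_imp _ _ (fun s Hs => eq_sym (proj1 (H s Hs)))).
      exact (locally_open_interval a b t Ht).
    - auto_derive.
      + repeat split; [eexists; exact Dg | exact Hg].
      + rewrite_derive Dg. field. apply Rgt_not_eq, sqrt_lt_R0, Hg. }
  destruct (H v Hv) as (HF & Hg & Dg & Dg1).
  pose proof (sqrt_lt_R0 _ Hg) as Hr. pose proof (sqrt_sqrt _ (Rlt_le _ _ Hg)) as Hrr.
  assert (D2F : Derive_n F 2 v = g2 v / (2 * sqrt (g v)) - g1 v ^ 2 / (4 * g v * sqrt (g v))).
  { simpl. rewrite (Derive_ext_loc _ (fun t => g1 t / (2 * sqrt (g t)))).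
    - apply is_derive_unique. auto_derive.
      + repeat split; try (eexists; eassumption); lra.
      + rewrite_derive Dg; rewrite_derive Dg1.
        set (r := sqrt (g v)) in *. rewrite <- Hrr. field. lra.
    - apply (filter_imp _ _ DF), (locally_open_interval a b v Hv). }
  unfold eq_lhs, sq_residual. rewrite D2F, (DF v Hv), HF.
  set (r := sqrt (g v)) in *. rewrite <- Hrr. field. lra.
Qed.

Lemma f_of_sqrt_inv (phi : R -> R) (t : R) : f_of phi t = sqrt (/ phi t).
Proof. unfold f_of. rewrite sqrt_inv. reflexivity. Qed.

Lemma inv_solution_sq_residual (tau u a b : R) (phi : R -> R) :
  (forall v, a < v < b -> 0 < u + v ^ 2 /\ 0 < phi v /\
     ex_derive phi v /\ ex_derive (Derive phi) v /\ eq_lhs tau u (f_of phi) v = 0) ->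
  forall t, a < t < b ->
    let g := fun t => / phi t in
    0 < u + t ^ 2 /\ 0 < g t /\ ex_derive g t /\ ex_derive (Derive g) t /\
    sq_residual tau u t (g t) (Derive g t) (Derive (Derive g) t) = 0.
Proof.
  intros H t Ht g.
  assert (Hg : forall y, a < y < b -> 0 < g y /\ ex_derive g y /\ ex_derive (Derive g) y).
  { intros y Hy. destruct (H y Hy) as (_ & Hphi & _).
    split; [apply Rinv_0_lt_compat, Hphi |].
    apply (ex_derive2_inv_on a b y phi g Hy).
    intros z Hz. destruct (H z Hz) as (_ & ? & ? & ? & _). repeat split; auto; lra. }
  destruct (H t Ht) as (Hpos & _ & _ & _ & Heq). destruct (Hg t Ht) as (Hgt & Dg & D2g).
  do 4 (split; [assumption |]).
  rewrite (eq_lhs_sqrt tau u a b t (f_of phi) g (Derive g) (Derive (Derive g)) Ht) in Heq.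
  - pose proof (sqrt_lt_R0 _ Hgt).
    apply (Rmult_eq_reg_r (/ (4 * g t * sqrt (g t)))); [rewrite Rmult_0_l; exact Heq |].
    apply Rinv_neq_0_compat, Rgt_not_eq, Rmult_lt_0_compat; lra.
  - intros y Hy. destruct (Hg y Hy) as (Hgy & Dgy & D2gy).
    split; [apply f_of_sqrt_inv |].
    split; [exact Hgy | split; apply Derive_correct; assumption].
Qed.

Definition energy (tau g h : R) : R := (4 * tau + h ^ 2 + 4 * g ^ 2) / (2 * g).
Definition coefA (tau g h W : R) : R := (energy tau g h + 2 * h) / (8 * W).
Definition coefB (tau g h : R) : R := g - energy tau g h / 4.
Definition coefC (tau g h W : R) : R := (energy tau g h - 2 * h) * W / 8.

Lemma energy_unique (tau g h e : R) : g <> 0 ->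
  2 * g * e - h ^ 2 - 4 * g ^ 2 - 4 * tau = 0 -> e = energy tau g h.
Proof. intros Hg H. unfold energy. field_simplify_eq; [lra | exact Hg]. Qed.

Lemma coefs_reconstruct (tau g h W : R) : g <> 0 -> W <> 0 ->
  g = coefA tau g h W * W + coefB tau g h + coefC tau g h W / W.
Proof. intros Hg HW. unfold coefA, coefB, coefC. field; auto. Qed.

Lemma coefs_discriminant (tau g h W : R) : g <> 0 -> W <> 0 ->
  4 * coefA tau g h W * coefC tau g h W - coefB tau g h ^ 2 = tau.
Proof. intros Hg HW. unfold coefA, coefB, coefC, energy. field; auto. Qed.

Lemma linear_system_invariants (g h E W : R -> R) (k x : R) :
  W x <> 0 ->
  is_derive g x (k * h x) -> is_derive h x (k * E x) ->
  is_derive E x (4 * k * h x) -> is_derive W x (2 * k * W x) ->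
  is_derive (fun t => (E t + 2 * h t) / (8 * W t)) x 0 /\
  is_derive (fun t => g t - E t / 4) x 0 /\
  is_derive (fun t => (E t - 2 * h t) * W t / 8) x 0.
Proof.
  intros HW Dg Dh DE DW.
  split; [|split]; (auto_derive; [repeat split; try (eexists; eassumption); lra |]);
    try rewrite_derive Dg; try rewrite_derive Dh; try rewrite_derive DE;
    try rewrite_derive DW; field; exact HW.
Qed.

Lemma coefs_stationary (g h W : R -> R) (tau k x : R) :
  g x <> 0 -> W x <> 0 ->
  is_derive g x (k * h x) -> is_derive h x (k * energy tau (g x) (h x)) ->
  is_derive W x (2 * k * W x) ->
  is_derive (fun t => coefA tau (g t) (h t) (W t)) x 0 /\
  is_derive (fun t => coefB tau (g t) (h t)) x 0 /\
  is_derive (fun t => coefC tau (g t) (h t) (W t)) x 0.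
Proof.
  intros Hg HW Dg Dh DW.
  apply (linear_system_invariants g h (fun t => energy tau (g t) (h t)) W k x HW Dg Dh); [|exact DW].
  unfold energy. auto_derive.
  - repeat split; try (eexists; eassumption). lra.
  - rewrite_derive Dg; rewrite_derive Dh. unfold energy. field. exact Hg.
Qed.

Definition sq_family (A B C : R) (s : bool) (u v : R) : R :=
  A * wfun s u v ^ 2 + B + C / wfun s u v ^ 2.

Lemma quadratic_family_derive (W : R -> R) (eps k A B C x : R) :
  eps ^ 2 = 1 -> W x <> 0 -> is_derive W x (2 * eps * k * W x) ->
  is_derive (fun t => A * W t + B + C / W t) x (k * (2 * eps * (A * W x - C / W x))) /\
  is_derive (fun t => 2 * eps * (A * W t - C / W t)) x (k * (4 * (A * W x + C / W x))).
Proof.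
  intros Heps HW D.
  split; (auto_derive; [repeat split; try exact HW; eexists; exact D |]);
    rewrite_derive D; field_simplify; try exact HW; rewrite ?Heps; field; exact HW.
Qed.

(* This also holds where [sq_family] vanishes: both sides are then [0] since [/ 0 = 0]. *)
Lemma phi_sol_sq_family (tau A B C : R) (s : bool) (u v : R) :
  A <> 0 -> wfun s u v <> 0 -> 4 * A * C - B ^ 2 = tau ->
  phi_sol tau B (2 * A) s u v = / sq_family A B C s u v.
Proof.
  intros HA Hw Htau. unfold phi_sol, sq_family.
  set (w := wfun s u v) in *.
  replace ((2 * A * w ^ 2 + B) ^ 2 + tau) with (4 * A * w ^ 2 * (A * w ^ 2 + B + C / w ^ 2))
    by (rewrite <- Htau; field; exact Hw).
  destruct (Req_dec (A * w ^ 2 + B + C / w ^ 2) 0) as [Hg | Hg].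
  - rewrite Hg, Rmult_0_r, Rinv_0. unfold Rdiv. rewrite Rinv_0. ring.
  - field. repeat split; try assumption.
    intros Hz. apply Hg.
    replace (A * w ^ 2 + B + C / w ^ 2) with (((A * w ^ 2 + B) * w ^ 2 + C) / w ^ 2)
      by (field; exact Hw).
    rewrite Hz. unfold Rdiv. ring.
Qed.

Lemma phi_sol_pos (tau p q : R) (s : bool) (u v : R) :
  0 < phi_sol tau p q s u v -> q <> 0 /\ wfun s u v <> 0.
Proof.
  unfold phi_sol, Rdiv. intros H.
  split; intros Hz; rewrite Hz in H; rewrite ?pow_i in H by lia;
    rewrite !Rmult_0_r, !Rmult_0_l in H; lra.
Qed.

Lemma sq_family_flip (B C u v : R) : 0 < u + v ^ 2 -> u <> 0 ->
  sq_family 0 B C true u v = sq_family (C / u ^ 2) B 0 false u v.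
Proof.
  intros H Hu. unfold sq_family.
  pose proof (wfun_mul u v H) as Hw.
  pose proof (wfun_neq0 true u v H Hu). pose proof (wfun_neq0 false u v H Hu).
  set (wt := wfun true u v) in *. set (wf := wfun false u v) in *.
  rewrite <- Hw. field. auto.
Qed.

Lemma sq_ode_solution_form (tau u a b x0 : R) (g : R -> R) :
  u <> 0 -> a < x0 < b ->
  (forall t, a < t < b -> 0 < u + t ^ 2 /\ 0 < g t /\
     ex_derive g t /\ ex_derive (Derive g) t /\
     sq_residual tau u t (g t) (Derive g t) (Derive (Derive g) t) = 0) ->
  exists A B C, 4 * A * C - B ^ 2 = tau /\
    forall t, a < t < b -> g t = sq_family A B C true u t.
Proof.
  intros Hu Hx0 H.
  set (W := fun t => wfun true u t ^ 2).
  set (h := fun t => sqrt (u + t ^ 2) * Derive g t).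
  assert (Hnz : forall t, a < t < b -> g t <> 0 /\ W t <> 0).
  { intros t Ht. destruct (H t Ht) as (Hpos & Hg & _).
    split; [lra | apply pow_nonzero, wfun_neq0; assumption]. }
  assert (D0 : forall t, a < t < b ->
    is_derive (fun t => coefA tau (g t) (h t) (W t)) t 0 /\
    is_derive (fun t => coefB tau (g t) (h t)) t 0 /\
    is_derive (fun t => coefC tau (g t) (h t) (W t)) t 0).
  { intros t Ht. destruct (H t Ht) as (Hpos & Hg & Dg & D2g & Hres).
    pose proof (sqrt_lt_R0 _ Hpos) as Hr.
    destruct (Hnz t Ht) as [Hg0 HW0].
    apply (coefs_stationary g h W tau (/ sqrt (u + t ^ 2)) t Hg0 HW0).
    - replace (/ sqrt (u + t ^ 2) * h t) with (Derive g t) by (unfold h; field; lra).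
      exact (Derive_correct g t Dg).
    - rewrite sq_residual_time_change in Hres by exact Hpos. fold (h t) in Hres.
      rewrite <- (energy_unique _ _ _ _ Hg0 Hres).
      apply (is_derive_ext (fun t => sqrt (u + t ^ 2) * Derive g t)); [reflexivity |].
      auto_derive.
      + replace (u + t * (t * 1)) with (u + t ^ 2) by ring. repeat split; auto.
      + replace (u + t * (t * 1)) with (u + t ^ 2) by ring.
        pose proof (sqrt_sqrt _ (Rlt_le _ _ Hpos)) as Hrr.
        change (Derive (fun x => Derive g x) t) with (Derive (Derive g) t).
        set (r := sqrt (u + t ^ 2)) in *. rewrite <- Hrr. field. lra.
    - replace (2 * / sqrt (u + t ^ 2) * W t)
        with (2 * sg true * / sqrt (u + t ^ 2) * wfun true u t ^ 2) by (unfold W, sg; ring).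
      exact (is_derive_wfun_sqr true u t Hpos). }
  exists (coefA tau (g x0) (h x0) (W x0)), (coefB tau (g x0) (h x0)),
    (coefC tau (g x0) (h x0) (W x0)).
  split; [apply coefs_discriminant; apply Hnz, Hx0 |].
  intros t Ht. destruct (Hnz t Ht) as [Hg HW].
  rewrite (coefs_reconstruct tau (g t) (h t) (W t) Hg HW).
  unfold sq_family. fold (W t).
  pose proof (is_derive_0_const_on a b _ (fun y Hy => proj1 (D0 y Hy)) t x0 Ht Hx0) as EA.
  pose proof (is_derive_0_const_on a b _ (fun y Hy => proj1 (proj2 (D0 y Hy))) t x0 Ht Hx0) as EB.
  pose proof (is_derive_0_const_on a b _ (fun y Hy => proj2 (proj2 (D0 y Hy))) t x0 Ht Hx0) as EC.
  cbv beta in EA, EB, EC. rewrite EA, EB, EC. reflexivity.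
Qed.

Lemma solution_is_phi_sol (tau u a b : R) (phi : R -> R) :
  (forall v, a < v < b -> 0 < u + v ^ 2 /\ u <> 0 /\ 0 < phi v /\
     ex_derive phi v /\ ex_derive (Derive phi) v /\ eq_lhs tau u (f_of phi) v = 0) ->
  (a < b -> exists v1 v2, a < v1 < b /\ a < v2 < b /\ phi v1 <> phi v2) ->
  exists p q s, forall v, a < v < b -> phi v = phi_sol tau p q s u v.
Proof.
  intros H Hnc.
  destruct (Rlt_dec a b) as [Hab | Hab]; [| exists 0, 0, true; intros v Hv; lra].
  set (x0 := (a + b) / 2). assert (Hx0 : a < x0 < b) by (unfold x0; lra).
  destruct (sq_ode_solution_form tau u a b x0 (fun t => / phi t)) as (A & B & C & Htau & Hform);
    [apply (H x0 Hx0) | exact Hx0 | |].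
  { apply inv_solution_sq_residual. intros v Hv.
    destruct (H v Hv) as (Hpos & _ & Hrest). exact (conj Hpos Hrest). }
  assert (Hphi : forall v, a < v < b -> phi v = / sq_family A B C true u v).
  { intros v Hv. rewrite <- Hform by exact Hv. rewrite Rinv_inv. reflexivity. }
  destruct (Req_dec A 0) as [HA | HA].
  - assert (HC : C <> 0).
    { intros HC. destruct (Hnc Hab) as (v1 & v2 & Hv1 & Hv2 & Hne). apply Hne.
      rewrite (Hphi v1 Hv1), (Hphi v2 Hv2). unfold sq_family. rewrite HA, HC.
      f_equal. unfold Rdiv. ring. }
    exists B, (2 * (C / u ^ 2)), false. intros v Hv. destruct (H v Hv) as (Hpos & Hu & _).
    rewrite Hphi, HA, sq_family_flip by assumption.
    symmetry. apply phi_sol_sq_family.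
    + unfold Rdiv. apply Rmult_integral_contrapositive_currified;
        [exact HC | apply Rinv_neq_0_compat, pow_nonzero, Hu].
    + apply wfun_neq0; assumption.
    + rewrite <- Htau, HA. ring.
  - exists B, (2 * A), true. intros v Hv. destruct (H v Hv) as (Hpos & Hu & _).
    rewrite Hphi by exact Hv. symmetry. apply phi_sol_sq_family; auto.
    apply wfun_neq0; assumption.
Qed.

Lemma sq_family_solves (tau u a b A B C v : R) (s : bool) (F : R -> R) :
  4 * A * C - B ^ 2 = tau -> a < v < b ->
  (forall t, a < t < b -> 0 < u + t ^ 2 /\ wfun s u t <> 0 /\
     0 < sq_family A B C s u t /\ F t = sqrt (sq_family A B C s u t)) ->
  eq_lhs tau u F v = 0 /\
  ex_derive (sq_family A B C s u) v /\ ex_derive (Derive (sq_family A B C s u)) v.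
Proof.
  intros Htau Hv H.
  set (W := fun t => wfun s u t ^ 2).
  set (h := fun t => 2 * sg s * (A * W t - C / W t)).
  set (e := fun t => 4 * (A * W t + C / W t)).
  set (g1 := fun t => / sqrt (u + t ^ 2) * h t).
  set (g2 := fun t => / (u + t ^ 2) * (e t - t * g1 t)).
  assert (D : forall t, a < t < b ->
    is_derive (sq_family A B C s u) t (g1 t) /\ is_derive g1 t (g2 t)).
  { intros t Ht. destruct (H t Ht) as (Hpos & Hw & _).
    destruct (quadratic_family_derive W (sg s) (/ sqrt (u + t ^ 2)) A B C t (sg_sqr s))
      as [Dg Dh].
    - apply pow_nonzero, Hw.
    - exact (is_derive_wfun_sqr s u t Hpos).
    - split; [exact Dg | exact (is_derive_div_sqrt u t _ h Hpos Dh)]. }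
  split; [|split].
  - destruct (H v Hv) as (Hpos & Hw & Hg & _).
    rewrite (eq_lhs_sqrt tau u a b v F (sq_family A B C s u) g1 g2 Hv).
    2:{ intros t Ht. destruct (H t Ht) as (_ & _ & ? & ?). repeat split; auto; apply D, Ht. }
    enough (sq_residual tau u v (sq_family A B C s u v) (g1 v) (g2 v) = 0) as ->
      by (unfold Rdiv; ring).
    rewrite sq_residual_time_change by exact Hpos.
    pose proof (sqrt_lt_R0 _ Hpos) as Hr.
    replace (v * g1 v + (u + v ^ 2) * g2 v) with (e v) by (unfold g2, g1; field; split; lra).
    replace (sqrt (u + v ^ 2) * g1 v) with (h v) by (unfold g1; field; lra).
    assert (HW : W v <> 0) by (apply pow_nonzero, Hw).
    unfold h, e, sq_family. fold (W v). rewrite <- Htau.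
    replace ((2 * sg s * (A * W v - C / W v)) ^ 2)
      with (sg s ^ 2 * (2 * (A * W v - C / W v)) ^ 2) by ring.
    rewrite sg_sqr. field. exact HW.
  - exists (g1 v). apply D, Hv.
  - apply (ex_derive_ext_loc g1).
    + apply (filter_imp _ _ (fun t Ht => eq_sym (is_derive_unique _ _ _ (proj1 (D t Ht))))).
      exact (locally_open_interval a b v Hv).
    + exists (g2 v). apply D, Hv.
Qed.

Lemma phi_sol_solves (tau u a b p q v : R) (s : bool) : a < v < b ->
  (forall t, a < t < b -> 0 < u + t ^ 2 /\ 0 < phi_sol tau p q s u t) ->
  (ex_derive (phi_sol tau p q s u) v /\ ex_derive (Derive (phi_sol tau p q s u)) v) /\
  eq_lhs tau u (f_of (phi_sol tau p q s u)) v = 0.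
Proof.
  intros Hv H.
  assert (Hq : q <> 0) by apply (phi_sol_pos tau p q s u v), H, Hv.
  set (A := q / 2). set (C := (p ^ 2 + tau) / (2 * q)).
  assert (Hfam : forall t, a < t < b -> 0 < u + t ^ 2 /\ wfun s u t <> 0 /\
    0 < sq_family A p C s u t /\ phi_sol tau p q s u t = / sq_family A p C s u t).
  { intros t Ht. destruct (H t Ht) as [Hpos Hphi].
    destruct (phi_sol_pos tau p q s u t Hphi) as [_ Hw].
    assert (E : phi_sol tau p q s u t = / sq_family A p C s u t).
    { replace q with (2 * A) at 1 by (unfold A; field).
      apply phi_sol_sq_family; [unfold A; lra | exact Hw | unfold A, C; field; exact Hq]. }
    repeat split; try assumption.
    rewrite <- (Rinv_inv (sq_family A p C s u t)), <- E. apply Rinv_0_lt_compat, Hphi. }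
  assert (Hsol : forall t, a < t < b ->
    eq_lhs tau u (f_of (phi_sol tau p q s u)) t = 0 /\
    ex_derive (sq_family A p C s u) t /\ ex_derive (Derive (sq_family A p C s u)) t).
  { intros t Ht. apply (sq_family_solves tau u a b A p C t s); auto.
    { unfold A, C. field. exact Hq. }
    intros y Hy. destruct (Hfam y Hy) as (Hpos & Hw & Hg & E).
    do 3 (split; [assumption |]).
    rewrite f_of_sqrt_inv, E, Rinv_inv. reflexivity. }
  split; [| apply Hsol, Hv].
  apply (ex_derive2_inv_on a b v (sq_family A p C s u)); [exact Hv |].
  intros t Ht. destruct (Hfam t Ht) as (_ & _ & Hg & E). destruct (Hsol t Ht) as (_ & ? & ?).
  repeat split; auto. lra.
Qed.

Theorem lemma7p1 :
  (forall (tau : R) (a b : R -> R) (phi : R -> R -> R),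
     (forall u v, a u < v < b u -> 0 < u + v ^ 2) ->
     (forall u v, a u < v < b u -> u <> 0) ->
     (forall u v, a u < v < b u -> 0 < phi u v) ->
     (forall u v, a u < v < b u -> twice_diff phi u v) ->
     (forall u v, a u < v < b u -> eq_lhs tau u (f_of (phi u)) v = 0) ->
     (forall u, a u < b u ->
        exists v1 v2, a u < v1 < b u /\ a u < v2 < b u /\ phi u v1 <> phi u v2) ->
     exists (p q : R -> R) (s : R -> bool),
       forall u v, a u < v < b u -> phi u v = phi_sol tau (p u) (q u) (s u) u v)
  /\
  (forall (tau : R) (a b : R -> R) (p q : R -> R) (s : R -> bool),
     (forall u v, a u < v < b u -> 0 < u + v ^ 2) ->
     (forall u v, a u < v < b u -> 0 < phi_sol tau (p u) (q u) (s u) u v) ->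
     forall u v, a u < v < b u ->
       twice_diff (fun u' v' => phi_sol tau (p u') (q u') (s u') u' v') u v /\
       eq_lhs tau u (f_of (fun v' => phi_sol tau (p u) (q u) (s u) u v')) v = 0).
Proof.
  split.
  - intros tau a b phi Hpos Hu Hphi Hdiff Heq Hnc.
    assert (Hsol : forall u, exists pqs : R * R * bool, forall v, a u < v < b u ->
      phi u v = phi_sol tau (fst (fst pqs)) (snd (fst pqs)) (snd pqs) u v).
    { intros u. destruct (solution_is_phi_sol tau u (a u) (b u) (phi u)) as (p & q & s & E).
      - intros v Hv. destruct (Hdiff u v Hv). repeat split; auto. exact (Hu u v Hv).
      - exact (Hnc u).
      - exists (p, q, s). exact E. }
    destruct (choice _ Hsol) as [pqs E].
    exists (fun u => fst (fst (pqs u))), (fun u => snd (fst (pqs u))), (fun u => snd (pqs u)).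
    exact E.
  - intros tau a b p q s Hpos Hphi u v Hv.
    apply (phi_sol_solves tau u (a u) (b u)); [exact Hv |].
    intros t Ht. split; [apply Hpos | apply Hphi]; exact Ht.
Qed.
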